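(* Let $d\ge1$, $t\ge1$ be integers and let $\mu_t$ be a finite Borel measure on $\mathbb S^d$ satisfying the lower Marcinkiewicz–Zygmund inequality of order $t$ with constant $a>0$, i.e. $a\|f\|_{L^2(\mathbb S^d)}^2\le\int_{\mathbb S^d}|f|^2\,d\mu_t$ for all $f\in\Pi_t$. Let $r\in(0,\pi/2]$ and $x\in\mathbb S^d$. If $\operatorname{supp}\mu_t\subseteq B_r(x)$, then \[ (\sin r)^{2t}\ge \frac{a}{\mu_t(\mathbb S^d)}\,\Lambda_{d,t},\qquad\text{where }\Lambda_{d,t}:=\int_{\mathbb S^d}(x\cdot y)^{2t}\,dy . \]
   Context: $\mathbb S^d\subset\mathbb R^{d+1}$ is the unit sphere with normalized surface measure $dy$ (total mass $1$); $\Lambda_{d,t}$ does not depend on $x\in\mathbb S^d$. $B_r(x)=\{y\in\mathbb S^d:x\cdot y\ge\cos r\}$. $\Pi_t$ is the space of restrictions to $\mathbb S^d$ of polynomials in $d+1$ variables of degree at most $t$. *)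

From HB Require Import structures.
From mathcomp Require Import all_boot all_order all_algebra.
From mathcomp Require Import mpoly.
From mathcomp Require Import all_classical all_reals all_analysis.

Set Implicit Arguments.
Unset Strict Implicit.
Unset Printing Implicit Defensive.

Import Order.TTheory GRing.Theory Num.Theory.
Import numFieldNormedType.Exports.
Local Open Scope classical_set_scope.
Local Open Scope ring_scope.

(* Ambient space R^(d+1) = 'rV[R]_(d.+1), equipped with its Borel
   sigma-algebra (generated by the open sets of the product topology). *)
Notation Rsp R d := (g_sigma_algebraType (@open 'rV[R]_(d.+1))).

Definition dotp (R : realType) (n : nat) (x y : 'rV[R]_n) : R :=
  \sum_(i < n) x 0 i * y 0 i.
Definition sqnorm (R : realType) (n : nat) (x : 'rV[R]_n) : R := dotp x x.

Definition sphere (R : realType) (d : nat) : set 'rV[R]_(d.+1) :=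
  [set y | sqnorm y = 1].
Arguments sphere {R} d.

Definition cap (R : realType) (d : nat) (r : R) (x : 'rV[R]_(d.+1))
  : set 'rV[R]_(d.+1) :=
  [set y | sphere d y /\ cos r <= dotp x y].
Arguments cap {R} d r x.

Definition msupport (R : realType) (d : nat)
  (mu : set (Rsp R d) -> \bar R) : set 'rV[R]_(d.+1) :=
  [set y | forall U : set 'rV[R]_(d.+1), open U -> U y -> (0 < mu U)%E].

(* Lebesgue integral over R^n of a [0,+oo]-valued function, written as the
   iterated one-dimensional Lebesgue integral (Tonelli). *)
Fixpoint iter_int (R : realType) (n : nat) : ('rV[R]_n -> \bar R) -> \bar R :=
  match n with
  | 0 => fun F => F 0
  | n'.+1 => fun F : 'rV[R]_(n'.+1) -> \bar R =>
      (\int[@lebesgue_measure R]_(x in [set: R])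
         iter_int (fun v : 'rV[R]_n' =>
           F (row_mx (const_mx (x : R) : 'rV[R]_1) v)))%E
  end.

Definition unit_ball (R : realType) (n : nat) : set 'rV[R]_n :=
  [set y | sqnorm y <= 1].
Definition radproj (R : realType) (n : nat) (y : 'rV[R]_n) : 'rV[R]_n :=
  (Num.sqrt (sqnorm y))^-1 *: y.

(* Integral against the normalized surface measure of S^d (total mass 1),
   for nonnegative integrands, via the cone-measure formula
   sigma(A) = vol{ s y : 0 < s <= 1, y in A } / vol(unit ball). *)
Definition sphere_int (R : realType) (d : nat)
  (g : 'rV[R]_(d.+1) -> \bar R) : \bar R :=
  ((fine (iter_int (fun y : 'rV[R]_(d.+1) =>
            if `[< unit_ball y >] then 1%E else 0%E)))^-1%:E *
   iter_int (fun y : 'rV[R]_(d.+1) =>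
            if `[< unit_ball y >] then g (radproj y) else 0%E))%E.
Arguments sphere_int {R} d g.

(* Pi_t : (restrictions to S^d of) real polynomials in d+1 variables of total
   degree at most t.  (msize p = 1 + total degree of p, msize 0 = 0.) *)
Definition Pi_t (R : realType) (d t : nat) : set ({mpoly R[d.+1]}) :=
  [set p | (msize p <= t.+1)%N].
Arguments Pi_t {R} d t.

Definition peval (R : realType) (d : nat) (p : {mpoly R[d.+1]})
  (y : 'rV[R]_(d.+1)) : R := meval (fun i => y 0 i) p.

Definition Lambda (R : realType) (d t : nat) (x : 'rV[R]_(d.+1)) : \bar R :=
  sphere_int d (fun y => ((dotp x y) ^+ (2 * t))%:E).
Arguments Lambda {R} d t x.

Definition lower_MZ (R : realType) (d t : nat) (a : R)
  (mu : {measure set (Rsp R d) -> \bar R}) : Prop :=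
  forall p : {mpoly R[d.+1]}, Pi_t d t p ->
    (a%:E * sphere_int d (fun y => ((peval p y) ^+ 2)%:E)
     <= \int[mu]_(y in (sphere d : set (Rsp R d))) ((peval p y) ^+ 2)%:E)%E.
Arguments lower_MZ {R} d t a mu.

From HB Require Import structures.
From mathcomp Require Import all_boot all_order all_algebra.
From mathcomp Require Import mpoly.
From mathcomp Require Import all_classical all_reals all_analysis.
From mathcomp Require Import measurable_realfun ring lra.
Import Order.TTheory GRing.Theory Num.Theory.
Import numFieldNormedType.Exports.

(* Take a unit vector v orthogonal to x and test the Marcinkiewicz-Zygmund
   inequality with p(y) = (v.y)^t.  On the cap B_r(x) one has
   (v.y)^2 <= 1 - (x.y)^2 <= sin^2 r, and the part of the sphere outside the
   cap is mu-null, being a countable union of compact sets that avoid the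
   support of mu; so the right-hand side is at most sin^(2t) r mu(S^d).  The
   left-hand side is a Lambda_{d,t}, because the surface integral of
   (z.y)^(2t) does not depend on the unit vector z: a product of plane
   rotations carries z to the first basis vector, a plane rotation is a
   product of three shears, and a shear preserves the iterated Lebesgue
   integral by translation invariance and Tonelli. *)

Set Implicit Arguments.
Unset Strict Implicit.
Unset Printing Implicit Defensive.
Local Open Scope classical_set_scope.
Local Open Scope ring_scope.

Section Translation.
Variable R : realType.
Local Notation mu := (@lebesgue_measure R).

Lemma measurable_addr (c : R) :
  measurable_fun setT ((fun x : R => x + c) : measurableTypeR R -> measurableTypeR R).
Proof. by apply: measurable_funD => //; exact: measurable_cst. Qed.

Lemma lebesgue_measure_addr (c : R) (A : set R) : measurable A ->
  pushforward mu ((fun x : R => x + c) : _ -> measurableTypeR R) A = mu A.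
Proof.
move=> mA; apply/esym/lebesgue_measure_unique => //=; first exact: measurable_addr.
move=> _ _ [[a b]] _ <-; rewrite /pushforward.
have -> : (fun x : R => x + c) @^-1` `]a, b]%classic = `](a - c), (b - c)]%classic.
  by apply/seteqP; split => x /=; rewrite !in_itv /= ?lerBrDr ?ltrBlDr.
rewrite !lebesgue_measure_itv/= !lte_fin ltrD2r -!EFinB.
by congr (if _ then _ else _); congr EFin; rewrite opprB addrA subrK.
Qed.

Lemma ge0_integral_addr (c : R) (f : R -> \bar R) :
  measurable_fun setT f -> (forall x, (0 <= f x)%E) ->
  (\int[mu]_x f ((x : R) + c)%R = \int[mu]_x f x)%E.
Proof.
move=> mf f0.
rewrite -[LHS]/(\int[mu]_(x in (fun x : R => x + c)%R @^-1` setT)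
                 (f \o (fun x : R => x + c)%R) x)%E.
rewrite -(ge0_integral_pushforward (measurable_addr c)) //.
apply: (@eq_measure_integral _ _ R setT mu
  (measure_function_pushforward__canonical__measure_function_Measure mu (measurable_addr c))).
by move=> /= A mA _; exact: lebesgue_measure_addr.
Qed.

End Translation.

Section Dotp.
Variable R : realType.
Implicit Types (n : nat) (k : R).

Lemma dotpC n (u w : 'rV[R]_n) : dotp u w = dotp w u.
Proof. by apply: eq_bigr => i _; rewrite mulrC. Qed.

Lemma dotpDl n (u w y : 'rV[R]_n) : dotp (u + w) y = dotp u y + dotp w y.
Proof. by rewrite /dotp -big_split; apply: eq_bigr => i _; rewrite mxE mulrDl. Qed.

Lemma dotpDr n (u w y : 'rV[R]_n) : dotp y (u + w) = dotp y u + dotp y w.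
Proof. by rewrite dotpC dotpDl !(dotpC y). Qed.

Lemma dotpZr n k (z y : 'rV[R]_n) : dotp z (k *: y) = k * dotp z y.
Proof. by rewrite /dotp mulr_sumr; apply: eq_bigr => i _; rewrite mxE mulrCA. Qed.

Lemma dotpZl n k (u y : 'rV[R]_n) : dotp (k *: u) y = k * dotp u y.
Proof. by rewrite dotpC dotpZr dotpC. Qed.

Lemma dotp0r n (y : 'rV[R]_n) : dotp y 0 = 0.
Proof. by apply: big1 => i _; rewrite mxE mulr0. Qed.

Lemma sqnorm_ge0 n (y : 'rV[R]_n) : 0 <= sqnorm y.
Proof. by apply: sumr_ge0 => i _; rewrite -expr2 sqr_ge0. Qed.

Lemma sqr_coord_le_sqnorm n (y : 'rV[R]_n) i : (y 0 i) ^+ 2 <= sqnorm y.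
Proof.
rewrite /sqnorm /dotp (bigD1 i) //= -expr2 lerDl.
by apply: sumr_ge0 => j _; rewrite -expr2 sqr_ge0.
Qed.

Lemma bessel_ineq2 n (x v y : 'rV[R]_n) :
  sqnorm x = 1 -> sqnorm v = 1 -> dotp x v = 0 ->
  (dotp x y) ^+ 2 + (dotp v y) ^+ 2 <= sqnorm y.
Proof.
move=> x1 v1 xv; set al := dotp x y; set be := dotp v y.
have := sqnorm_ge0 (y + (- al) *: x + (- be) *: v).
suff -> : sqnorm (y + (- al) *: x + (- be) *: v) = sqnorm y - al ^+ 2 - be ^+ 2 by lra.
rewrite /sqnorm !dotpDl !dotpDr !dotpZl !dotpZr (dotpC y x) (dotpC y v) (dotpC v x).
by move: x1 v1; rewrite /sqnorm => -> ->; rewrite xv -/al -/be; ring.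
Qed.

End Dotp.

Section RowCons.
Variable R : realType.

Definition row_cons {m} (a : R) (w : 'rV[R]_m) : 'rV[R]_m.+1 :=
  row_mx (const_mx a : 'rV[R]_1) w.
Definition row_head {m} (y : 'rV[R]_m.+1) : R := y 0 ord0.
Definition row_tail {m} (y : 'rV[R]_m.+1) : 'rV[R]_m := rsubmx (y : 'M[R]_(1, 1 + m)).

Lemma row_cons_ord0 m a (w : 'rV[R]_m) : row_cons a w 0 ord0 = a.
Proof.
have -> : (ord0 : 'I_m.+1) = lshift m (ord0 : 'I_1) by apply: val_inj.
by rewrite /row_cons; apply: etrans (row_mxEl _ _ _ _) _; rewrite mxE.
Qed.

Lemma row_cons_lift m a (w : 'rV[R]_m) j : row_cons a w 0 (lift ord0 j) = w 0 j.
Proof.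
have -> : (lift ord0 j : 'I_m.+1) = rshift 1 j by apply: val_inj.
exact: (row_mxEr (const_mx a : 'M[R]_(1, 1)) w 0 j).
Qed.

Lemma row_head_cons m a (w : 'rV[R]_m) : row_head (row_cons a w) = a.
Proof. exact: row_cons_ord0. Qed.

Lemma row_tail_cons m a (w : 'rV[R]_m) : row_tail (row_cons a w) = w.
Proof. exact: row_mxKr. Qed.

Lemma row_cons_head_tail m (y : 'rV[R]_m.+1) : row_cons (row_head y) (row_tail y) = y.
Proof.
apply/rowP => i; case: (unliftP ord0 i) => [j ->|->]; last by rewrite row_cons_ord0.
by rewrite row_cons_lift /row_tail mxE; congr (y _ _); exact: val_inj.
Qed.

Lemma row_consP m (y : 'rV[R]_m.+1) : exists a w, y = row_cons a w.
Proof. by exists (row_head y), (row_tail y); rewrite row_cons_head_tail. Qed.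

Lemma dotp_row_cons m a b (u w : 'rV[R]_m) :
  dotp (row_cons a u) (row_cons b w) = a * b + dotp u w.
Proof.
rewrite /dotp big_ord_recl !row_cons_ord0; congr (_ + _).
by apply: eq_bigr => i _; rewrite !row_cons_lift.
Qed.

Lemma sqnorm_row_cons m a (w : 'rV[R]_m) : sqnorm (row_cons a w) = a ^+ 2 + sqnorm w.
Proof. by rewrite /sqnorm dotp_row_cons expr2. Qed.

Lemma scale_row_cons m k a (w : 'rV[R]_m) : k *: row_cons a w = row_cons (k * a) (k *: w).
Proof.
apply/rowP => i; rewrite mxE.
case: (unliftP ord0 i) => [j ->|->]; first by rewrite !row_cons_lift mxE.
by rewrite !row_cons_ord0.
Qed.

Lemma iter_int_cons m (G : 'rV[R]_m.+1 -> \bar R) :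
  iter_int G = (\int[lebesgue_measure]_x iter_int (fun w => G (row_cons x w)))%E.
Proof. by []. Qed.

Lemma iter_int_ge0 m (G : 'rV[R]_m -> \bar R) :
  (forall y, 0 <= G y)%E -> (0 <= iter_int G)%E.
Proof.
elim: m G => [|m IH] G G0 /=; first exact: G0.
by apply: integral_ge0 => x _; apply: IH => w; exact: G0.
Qed.

End RowCons.

Section ParamMeasurable.
Variable R : realType.

(* [pmeasurable G] is joint measurability of [G] in the parameter and the
   coordinates, the coordinates being absorbed into the parameter one at a
   time in the order in which [iter_int] integrates them: exactly what
   Tonelli needs at each step of an iterated integral. *)
Fixpoint pmeasurable (m : nat) : forall (dP : measure_display) (P : measurableType dP)
   (dV : measure_display) (V : measurableType dV), (P -> 'rV[R]_m -> V) -> Prop :=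
  match m with
  | 0 => fun dP P dV V G => measurable_fun setT (fun p => G p 0)
  | m'.+1 => fun dP P dV V G =>
      @pmeasurable m' _ (P * measurableTypeR R)%type dV V
        (fun pq w => G pq.1 (row_cons pq.2 w))
  end.
Arguments pmeasurable {m dP P dV V} G.

Definition rmeasurable {m} (G : 'rV[R]_m -> \bar R) :=
  pmeasurable (fun (_ : measurableTypeR R) y => G y).

Lemma pmeasurable_ext m dP (P : measurableType dP) dV (V : measurableType dV)
  (G1 G2 : P -> 'rV[R]_m -> V) :
  (forall p y, G2 p y = G1 p y) -> pmeasurable G1 -> pmeasurable G2.
Proof. by move=> E; have -> : G2 = G1 by apply/funext => p; apply/funext => y. Qed.

Lemma pmeasurable_cst m dP (P : measurableType dP) dV (V : measurableType dV)
  (g : P -> V) : measurable_fun setT g -> @pmeasurable m _ P _ V (fun p _ => g p).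
Proof.
elim: m dP P g => [|m IH] dP P g mg //=.
by apply: IH; exact: measurableT_comp.
Qed.

Lemma pmeasurable_comp m dP (P : measurableType dP) dQ (Q : measurableType dQ)
  dV (V : measurableType dV) (phi : Q -> P) (G : P -> 'rV[R]_m -> V) :
  measurable_fun setT phi -> pmeasurable G -> pmeasurable (fun q => G (phi q)).
Proof.
elim: m dP P dQ Q phi G => [|m IH] dP P dQ Q phi G mphi /= mG.
  exact: (measurableT_comp mG mphi).
pose psi := fun qx : Q * measurableTypeR R => (phi qx.1, qx.2).
apply: (IH _ _ _ _ psi _ _ mG); apply: measurable_fun_pair => //.
exact: (measurableT_comp mphi measurable_fst).
Qed.

Lemma pmeasurable_map m dP (P : measurableType dP) dV (V : measurableType dV)
  dW (W : measurableType dW) (h : V -> W) (G : P -> 'rV[R]_m -> V) :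
  measurable_fun setT h -> pmeasurable G -> pmeasurable (fun p y => h (G p y)).
Proof.
elim: m dP P G => [|m IH] dP P G mh /= mG; first exact: measurableT_comp.
exact: IH.
Qed.

Lemma pmeasurable_map2 m dP (P : measurableType dP) d1 (V1 : measurableType d1)
  d2 (V2 : measurableType d2) d3 (V3 : measurableType d3) (op : V1 -> V2 -> V3) :
  (forall dQ (Q : measurableType dQ) (f : Q -> V1) (g : Q -> V2),
     measurable_fun setT f -> measurable_fun setT g ->
     measurable_fun setT (fun q => op (f q) (g q))) ->
  forall (G1 : P -> 'rV[R]_m -> V1) (G2 : P -> 'rV[R]_m -> V2),
  pmeasurable G1 -> pmeasurable G2 -> pmeasurable (fun p y => op (G1 p y) (G2 p y)).
Proof.
move=> mop; elim: m dP P => [|m IH] dP P G1 G2 /= mG1 mG2; first exact: mop.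
exact: IH.
Qed.

Lemma pmeasurable_coord m dP (P : measurableType dP) (i : 'I_m) :
  pmeasurable (fun (_ : P) (y : 'rV[R]_m) => y 0 i).
Proof.
elim: m dP P i => [|m IH] dP P i /=; first by case: i.
case: (unliftP ord0 i) => [j ->|->].
  by apply: (pmeasurable_ext _ (IH _ _ j)) => pq w; rewrite row_cons_lift.
have -> : (fun (pq : P * measurableTypeR R) (w : 'rV[R]_m) => row_cons pq.2 w 0 ord0)
    = (fun pq _ => pq.2).
  by apply/funext => pq; apply/funext => w; rewrite row_cons_ord0.
by apply: pmeasurable_cst; exact: measurable_snd.
Qed.

Lemma pmeasurable_sum m dP (P : measurableType dP) (I : Type) (s : seq I)
  (F : I -> P -> 'rV[R]_m -> R) :
  (forall i, pmeasurable (F i)) -> pmeasurable (fun p y => \sum_(i <- s) F i p y).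
Proof.
move=> mF; elim: s => [|i s IH].
  apply: (pmeasurable_ext (G1 := fun (_ : P) (_ : 'rV[R]_m) => (0 : R))); first by move=> p y; rewrite big_nil.
  by apply: pmeasurable_cst; exact: measurable_cst.
apply: (pmeasurable_ext (G1 := fun p y => F i p y + \sum_(j <- s) F j p y)).
  by move=> p y; rewrite big_cons.
apply: (pmeasurable_map2 (op := fun u v : R => u + v)) => //.
by move=> dQ Q f g mf mg; exact: measurable_funD.
Qed.

Lemma pmeasurable_mul m dP (P : measurableType dP) (F1 F2 : P -> 'rV[R]_m -> R) :
  pmeasurable F1 -> pmeasurable F2 -> pmeasurable (fun p y => F1 p y * F2 p y).
Proof.
apply: (pmeasurable_map2 (op := fun u v : R => u * v)).
by move=> dQ Q f g mf mg; exact: measurable_funM.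
Qed.

Lemma pmeasurable_dotp m dP (P : measurableType dP) (z : 'rV[R]_m) :
  pmeasurable (fun (_ : P) y => dotp z y).
Proof.
apply: pmeasurable_sum => i; apply: pmeasurable_mul; last exact: pmeasurable_coord.
by apply: pmeasurable_cst; exact: measurable_cst.
Qed.

Lemma pmeasurable_sqnorm m dP (P : measurableType dP) :
  pmeasurable (fun (_ : P) (y : 'rV[R]_m) => sqnorm y).
Proof. by apply: pmeasurable_sum => i; apply: pmeasurable_mul; exact: pmeasurable_coord. Qed.

Lemma measurable_iter_int m dP (P : measurableType dP) (G : P -> 'rV[R]_m -> \bar R) :
  pmeasurable G -> (forall p y, 0 <= G p y)%E ->
  measurable_fun setT (fun p => iter_int (G p)).
Proof.
elim: m dP P G => [|m IH] dP P G /= mG G0; first exact: mG.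
apply: (measurable_fun_fubini_tonelli_F (m2 := @lebesgue_measure R) _ (IH _ _ _ mG _)).
  by move=> pq w; exact: G0.
by move=> pq; apply: iter_int_ge0 => w; exact: G0.
Qed.

End ParamMeasurable.
Arguments pmeasurable {R m dP P dV V} G.
Arguments rmeasurable {R m} G.

Section PreservingMaps.
Variable R : realType.
Local Notation mu := (@lebesgue_measure R).
Local Open Scope ereal_scope.

Definition pmeasurable_stable {m} (T : 'rV[R]_m -> 'rV[R]_m) :=
  forall dP (P : measurableType dP) dV (V : measurableType dV)
         (G : P -> 'rV[R]_m -> V), pmeasurable G -> pmeasurable (fun p y => G p (T y)).

Definition iter_int_invariant {m} (T : 'rV[R]_m -> 'rV[R]_m) :=
  forall G : 'rV[R]_m -> \bar R, rmeasurable G -> (forall y, 0 <= G y) ->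
    iter_int (fun y => G (T y)) = iter_int G.

Definition iter_int_preserving {m} (T : 'rV[R]_m -> 'rV[R]_m) :=
  pmeasurable_stable T /\ iter_int_invariant T.

Lemma iter_int_preserving_id m : iter_int_preserving (fun y : 'rV[R]_m => y).
Proof. by split. Qed.

Lemma iter_int_preserving_comp m (T1 T2 : 'rV[R]_m -> 'rV[R]_m) :
  iter_int_preserving T1 -> iter_int_preserving T2 ->
  iter_int_preserving (fun y => T1 (T2 y)).
Proof.
move=> [S1 I1] [S2 I2]; split=> [dP P dV V G mG|G mG G0].
  by apply: (S2 _ _ _ _ (fun p y => G p (T1 y))); exact: S1.
rewrite (I2 (fun y => G (T1 y))) ?I1 //; first exact: (S1 _ _ _ _ (fun _ y => G y)).
Qed.

Definition lift_map {m} (T : 'rV[R]_m -> 'rV[R]_m) (y : 'rV[R]_m.+1) : 'rV[R]_m.+1 :=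
  row_cons (row_head y) (T (row_tail y)).

Lemma lift_map_cons m (T : 'rV[R]_m -> 'rV[R]_m) a w :
  lift_map T (row_cons a w) = row_cons a (T w).
Proof. by rewrite /lift_map row_head_cons row_tail_cons. Qed.

Lemma rmeasurable_cons m (G : 'rV[R]_m.+1 -> \bar R) a :
  rmeasurable G -> rmeasurable (fun w => G (row_cons a w)).
Proof.
move=> mG; apply: (pmeasurable_comp (P := (measurableTypeR R * measurableTypeR R)%type)
  (phi := fun p : measurableTypeR R => (p, a)) _ mG).
by apply: measurable_fun_pair => //; exact: measurable_cst.
Qed.

Lemma iter_int_preserving_lift m (T : 'rV[R]_m -> 'rV[R]_m) :
  iter_int_preserving T -> iter_int_preserving (lift_map T).
Proof.
move=> [ST IT]; split=> [dP P dV V G /= mG|G mG G0].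
  apply: (pmeasurable_ext _ (ST _ _ _ _
    (fun (pq : P * measurableTypeR R) w => G pq.1 (row_cons pq.2 w)) mG)).
  by move=> pq w; rewrite lift_map_cons.
rewrite !iter_int_cons; apply: eq_integral => a _.
rewrite -(IT _ (rmeasurable_cons a mG)); last by move=> w; exact: G0.
by congr iter_int; apply/funext => w; rewrite lift_map_cons.
Qed.

Local Close Scope ereal_scope.

Definition swap01 {m} (y : 'rV[R]_m.+2) : 'rV[R]_m.+2 :=
  row_cons (row_head (row_tail y)) (row_cons (row_head y) (row_tail (row_tail y))).

Definition shear01 {m} (c : R) (y : 'rV[R]_m.+2) : 'rV[R]_m.+2 :=
  row_cons (row_head y)
    (row_cons (row_head (row_tail y) + c * row_head y) (row_tail (row_tail y))).

Lemma swap01_cons m a b (w : 'rV[R]_m) :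
  swap01 (row_cons a (row_cons b w)) = row_cons b (row_cons a w).
Proof. by rewrite /swap01 !row_tail_cons !row_head_cons. Qed.

Lemma shear01_cons m c a b (w : 'rV[R]_m) :
  shear01 c (row_cons a (row_cons b w)) = row_cons a (row_cons (b + c * a) w).
Proof. by rewrite /shear01 !row_tail_cons !row_head_cons. Qed.

Lemma rmeasurable_cons2 m (G : 'rV[R]_m.+2 -> \bar R) : rmeasurable G ->
  pmeasurable (fun (ab : measurableTypeR R * measurableTypeR R) w =>
    G (row_cons ab.1 (row_cons ab.2 w))).
Proof.
move=> mG; apply: (pmeasurable_comp
  (P := ((measurableTypeR R * measurableTypeR R) * measurableTypeR R)%type)
  (phi := fun ab : measurableTypeR R * measurableTypeR R => ((0 : R, ab.1), ab.2)) _ mG).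
by apply: measurable_fun_pair => //; apply: measurable_fun_pair.
Qed.

Local Open Scope ereal_scope.

Definition iter_int_tail2 {m} (G : 'rV[R]_m.+2 -> \bar R)
    (ab : measurableTypeR R * measurableTypeR R) : \bar R :=
  iter_int (fun w => G (row_cons ab.1 (row_cons ab.2 w))).

Lemma iter_int_tail2E m (G : 'rV[R]_m.+2 -> \bar R) :
  iter_int G = \int[mu]_a \int[mu]_b iter_int_tail2 G (a, b).
Proof. by []. Qed.

Lemma measurable_iter_int_tail2 m (G : 'rV[R]_m.+2 -> \bar R) :
  rmeasurable G -> (forall y, 0 <= G y) -> measurable_fun setT (iter_int_tail2 G).
Proof.
by move=> mG G0; apply: measurable_iter_int; [exact: rmeasurable_cons2 | move=> *; exact: G0].
Qed.

Lemma iter_int_tail2_ge0 m (G : 'rV[R]_m.+2 -> \bar R) :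
  (forall y, 0 <= G y) -> forall ab, 0 <= iter_int_tail2 G ab.
Proof. by move=> G0 ab; apply: iter_int_ge0 => w; exact: G0. Qed.

Lemma iter_int_preserving_swap01 m : iter_int_preserving (@swap01 m).
Proof.
split=> [dP P dV V G /= mG|G mG G0].
  apply: (pmeasurable_ext _ (pmeasurable_comp
    (phi := fun pqr : P * measurableTypeR R * measurableTypeR R =>
       ((pqr.1.1, pqr.2), pqr.1.2)) _ mG)); first by move=> q w /=; rewrite swap01_cons.
  apply: measurable_fun_pair; last exact: (measurableT_comp measurable_snd measurable_fst).
  apply: measurable_fun_pair; last exact: measurable_snd.
  exact: (measurableT_comp measurable_fst measurable_fst).
rewrite [RHS]iter_int_tail2E (fubini_tonelli (m1 := mu) (m2 := mu) _
  (measurable_iter_int_tail2 mG G0) (iter_int_tail2_ge0 G0)).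
rewrite iter_int_cons; apply: eq_integral => a _.
rewrite iter_int_cons; apply: eq_integral => b _.
by rewrite /iter_int_tail2; congr iter_int; apply/funext => w; rewrite swap01_cons.
Qed.

Lemma iter_int_preserving_shear01 m c : iter_int_preserving (@shear01 m c).
Proof.
split=> [dP P dV V G /= mG|G mG G0].
  apply: (pmeasurable_ext _ (pmeasurable_comp
    (phi := fun pqr : P * measurableTypeR R * measurableTypeR R =>
       (((pqr.1.1, pqr.1.2), (pqr.2 + c * pqr.1.2)%R)
          : P * measurableTypeR R * measurableTypeR R)) _ mG)).
    by move=> q w /=; rewrite shear01_cons.
  apply: measurable_fun_pair.
    apply: measurable_fun_pair; first exact: (measurableT_comp measurable_fst measurable_fst).
    exact: (measurableT_comp measurable_snd measurable_fst).
  apply: measurable_funD; first exact: measurable_snd.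
  apply: measurable_funM; first exact: measurable_cst.
  exact: (measurableT_comp measurable_snd measurable_fst).
rewrite [RHS]iter_int_tail2E iter_int_cons; apply: eq_integral => a _.
rewrite -(ge0_integral_addr (c * a)%R (f := fun b => iter_int_tail2 G (a, b))).
- rewrite iter_int_cons; apply: eq_integral => b _.
  by rewrite /iter_int_tail2; congr iter_int; apply/funext => w; rewrite shear01_cons.
- apply: (measurableT_comp (measurable_iter_int_tail2 mG G0)).
  by apply: measurable_fun_pair => //; exact: measurable_cst.
- by move=> b; exact: iter_int_tail2_ge0.
Qed.

End PreservingMaps.
Arguments swap01 {R m}.
Arguments shear01 {R m}.
Arguments lift_map {R m}.

Section Rotations.
Variable R : realType.

Definition rotate01 {m} (c s : R) (y : 'rV[R]_m.+2) : 'rV[R]_m.+2 :=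
  row_cons (c * row_head y - s * row_head (row_tail y))
    (row_cons (s * row_head y + c * row_head (row_tail y)) (row_tail (row_tail y))).

Lemma rotate01_cons m c s a b (w : 'rV[R]_m) :
  rotate01 c s (row_cons a (row_cons b w)) =
  row_cons (c * a - s * b) (row_cons (s * a + c * b) w).
Proof. by rewrite /rotate01 !row_tail_cons !row_head_cons. Qed.

(* With a = (c - 1) / s, the rotation by (c, s) is the composite of the
   shears (p, q) |-> (p + a q, q), (p, q) |-> (p, q + s p), (p, q) |-> (p + a q, q). *)
Lemma iter_int_preserving_rotate01 m c s : s != 0 -> c ^+ 2 + s ^+ 2 = 1 ->
  iter_int_preserving (@rotate01 m c s).
Proof.
move=> s0 cs; pose a := (c - 1) / s.
pose U := fun y : 'rV[R]_m.+2 => swap01 (shear01 a (swap01 y)).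
have PU : iter_int_preserving U.
  apply: iter_int_preserving_comp; first exact: iter_int_preserving_swap01.
  apply: iter_int_preserving_comp; first exact: iter_int_preserving_shear01.
  exact: iter_int_preserving_swap01.
suff -> : rotate01 c s = fun y => U (shear01 s (U y)).
  by apply: iter_int_preserving_comp PU (iter_int_preserving_comp _ PU);
     exact: iter_int_preserving_shear01.
apply/funext => y; have [p [w ->]] := row_consP y; have [q [w' ->]] := row_consP w.
rewrite /U !(swap01_cons, shear01_cons) rotate01_cons.
have as_ : a * s = c - 1 by rewrite /a divfK.
have k : 2 * a + a ^+ 2 * s = - s.
  apply: (mulfI s0).
  have -> : s * (2 * a + a ^+ 2 * s) = 2 * (a * s) + (a * s) ^+ 2 by ring.
  by rewrite as_; have := cs; nra.
congr row_cons; last congr row_cons.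
- have -> : p + a * q + a * (q + s * (p + a * q)) =
            p * (1 + a * s) + q * (2 * a + a ^+ 2 * s) by ring.
  by rewrite k as_; ring.
- have -> : q + s * (p + a * q) = s * p + q * (1 + a * s) by ring.
  by rewrite as_; ring.
Qed.

Definition radial_isometry {m} (T : 'rV[R]_m -> 'rV[R]_m) :=
  (forall y, sqnorm (T y) = sqnorm y) /\ (forall k y, T (k *: y) = k *: T y).

Lemma radial_isometry_comp m (T1 T2 : 'rV[R]_m -> 'rV[R]_m) :
  radial_isometry T1 -> radial_isometry T2 -> radial_isometry (fun y => T1 (T2 y)).
Proof. by move=> [n1 h1] [n2 h2]; split=> [y|k y]; rewrite ?n1 ?n2 ?h2 ?h1. Qed.

Lemma radial_isometry_lift m (T : 'rV[R]_m -> 'rV[R]_m) :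
  radial_isometry T -> radial_isometry (lift_map T).
Proof.
move=> [nT hT]; split=> [y|k y]; have [b [w ->]] := row_consP y.
  by rewrite lift_map_cons !sqnorm_row_cons nT.
by rewrite scale_row_cons !lift_map_cons hT scale_row_cons.
Qed.

Lemma radial_isometry_rotate01 m c s : c ^+ 2 + s ^+ 2 = 1 ->
  radial_isometry (@rotate01 m c s).
Proof.
move=> cs; split=> [y|k y]; have [b [w ->]] := row_consP y;
  have [b' [w' ->]] := row_consP w.
  rewrite rotate01_cons !sqnorm_row_cons !addrA; congr (_ + _).
  have -> : (c * b - s * b') ^+ 2 + (s * b + c * b') ^+ 2 =
            (c ^+ 2 + s ^+ 2) * (b ^+ 2 + b' ^+ 2) by ring.
  by rewrite cs mul1r.
rewrite !(scale_row_cons, rotate01_cons).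
by congr row_cons; [ring | congr row_cons; ring].
Qed.

(* By induction the tail of z = (a, z') is seen as rho' times the first axis
   of the tail; a plane rotation in the first two coordinates then merges
   (a, rho') into (rho, 0). *)
Lemma rotate_to_axis n (z : 'rV[R]_n.+1) :
  exists T : 'rV[R]_n.+1 -> 'rV[R]_n.+1,
  [/\ iter_int_preserving T, radial_isometry T &
      exists rho, rho ^+ 2 = sqnorm z /\ forall y, dotp z (T y) = rho * row_head y].
Proof.
elim: n z => [|n IH] z.
  exists id; split; [exact: iter_int_preserving_id | by [] |].
  have [a [w ->]] := row_consP z; exists a.
  split=> [|y]; last have [b [w' ->]] := row_consP y.
    by rewrite sqnorm_row_cons /sqnorm /dotp big_ord0 addr0.
  by rewrite dotp_row_cons row_head_cons /dotp big_ord0 addr0.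
have [a [z' ->]] := row_consP z.
have [T' [PT' IT' [rho' [erho' drho']]]] := IH z'.
have dotp_lift b w : dotp (row_cons a z') (lift_map T' (row_cons b w)) =
    a * b + rho' * row_head w by rewrite lift_map_cons dotp_row_cons drho'.
have [r0|r0] := eqVneq rho' 0.
  exists (lift_map T'); split.
  - exact: iter_int_preserving_lift.
  - exact: radial_isometry_lift.
  exists a; split; first by rewrite sqnorm_row_cons -erho' r0 expr0n /= addr0.
  by move=> y; have [b [w ->]] := row_consP y; rewrite dotp_lift r0 mul0r addr0 row_head_cons.
pose rho := Num.sqrt (a ^+ 2 + rho' ^+ 2).
have rho2 : rho ^+ 2 = a ^+ 2 + rho' ^+ 2 by rewrite sqr_sqrtr // addr_ge0 // sqr_ge0.
have rho_neq0 : rho != 0.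
  rewrite gt_eqF // sqrtr_gt0 ltr_wpDl ?sqr_ge0 //.
  by rewrite lt0r sqr_ge0 sqrf_eq0 r0.
pose c := a / rho; pose s := rho' / rho.
have s0 : s != 0 by rewrite mulf_neq0 // invr_eq0.
have cs : c ^+ 2 + s ^+ 2 = 1.
  by rewrite /c /s !expr_div_n -mulrDl -rho2 divff // expf_neq0.
exists (fun y => lift_map T' (rotate01 c s y)); split.
- apply: iter_int_preserving_comp; first exact: iter_int_preserving_lift.
  exact: iter_int_preserving_rotate01.
- apply: radial_isometry_comp; first exact: radial_isometry_lift.
  exact: radial_isometry_rotate01.
exists rho; split; first by rewrite rho2 sqnorm_row_cons erho'.
move=> y; have [b [w ->]] := row_consP y; have [b' [w' ->]] := row_consP w.
rewrite rotate01_cons dotp_lift !row_head_cons /c /s.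
have -> : a * (a / rho * b - rho' / rho * b') + rho' * (rho' / rho * b + a / rho * b')
   = (a ^+ 2 + rho' ^+ 2) / rho * b by field.
by rewrite -rho2; field.
Qed.

End Rotations.

Section SphereIntegral.
Variable R : realType.

Lemma measurable_inv : measurable_fun setT (fun x : R => x^-1).
Proof.
have -> : (fun x : R => x^-1) = fun x => if x == 0 then 0 else x^-1.
  by apply/funext => x; case: eqP => // ->; rewrite invr0.
apply: measurable_fun_if => //.
  by apply: measurable_fun_eqr => //; exact: measurable_cst.
have -> : setT `&` (eq_op^~ 0) @^-1` [set false] = [set x : R | x != 0].
  by apply/seteqP; split => x /=; rewrite ?setTI //=; case: (x == 0) => //= [[]].
apply: open_continuous_measurable_fun; first exact: open_neq.
by move=> x; rewrite inE /= => x0; exact: inv_continuous.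
Qed.

Lemma rmeasurable_cone_dotp_pow d t (z : 'rV[R]_d.+1) :
  rmeasurable (fun y => if `[< unit_ball y >]
                        then ((dotp z (radproj y)) ^+ (2 * t))%:E else 0%E).
Proof.
apply: (pmeasurable_ext (G1 := fun _ y =>
    (fun (u : R) (v : \bar R) => if u <= 1 then v else 0%E) (sqnorm y)
      (((Num.sqrt (sqnorm y))^-1 * dotp z y) ^+ (2 * t))%:E)).
  by move=> _ y; rewrite /unit_ball /= asboolb /radproj dotpZr.
apply: (pmeasurable_map2 (op := fun (u : R) (v : \bar R) => if u <= 1 then v else 0%E)).
- move=> dQ Q f g mf mg /=; apply: measurable_fun_ifT.
  + by apply: measurable_fun_ler => //; exact: measurable_cst.
  + exact: mg.
  + exact: measurable_cst.
- exact: pmeasurable_sqnorm.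
apply: (pmeasurable_map (h := EFin)); first exact: EFin_measurable.
apply: (pmeasurable_map (h := fun x : R => x ^+ (2 * t))); first exact: exprn_measurable.
apply: pmeasurable_mul; last exact: pmeasurable_dotp.
apply: (pmeasurable_map (h := fun u : R => (Num.sqrt u)^-1)); last exact: pmeasurable_sqnorm.
apply: (measurableT_comp measurable_inv).
by apply: continuous_measurable_fun; exact: sqrt_continuous.
Qed.

Lemma sphere_int_comp d (g : 'rV[R]_d.+1 -> \bar R) (T : 'rV[R]_d.+1 -> 'rV[R]_d.+1) :
  iter_int_preserving T -> radial_isometry T ->
  rmeasurable (fun y => if `[< unit_ball y >] then g (radproj y) else 0%E) ->
  (forall y, 0 <= g y)%E ->
  sphere_int d (fun y => g (T y)) = sphere_int d g.
Proof.
move=> [_ IT] [nT hT] mg g0; rewrite /sphere_int; congr (_ * _)%E.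
rewrite -(IT _ mg); last by move=> y; case: asboolP.
by congr iter_int; apply/funext => y; rewrite /unit_ball /= nT /radproj nT hT.
Qed.

Lemma sphere_int_dotp_pow_axis d t (z : 'rV[R]_d.+1) : sqnorm z = 1 ->
  sphere_int d (fun y => ((dotp z y) ^+ (2 * t))%:E) =
  sphere_int d (fun y => ((row_head y) ^+ (2 * t))%:E).
Proof.
move=> z1; have [T [PT IT [rho [rho2 dotpT]]]] := rotate_to_axis z.
rewrite -(sphere_int_comp PT IT (rmeasurable_cone_dotp_pow t z)); last first.
  by move=> y; rewrite lee_fin exprM exprn_ge0 ?sqr_ge0.
congr sphere_int; apply/funext => y.
by rewrite dotpT exprMn exprM rho2 z1 expr1n mul1r.
Qed.

Lemma Lambda_ge0 d t (x : 'rV[R]_d.+1) : (0 <= Lambda d t x)%E.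
Proof.
rewrite /Lambda /sphere_int; apply: mule_ge0.
  by rewrite lee_fin invr_ge0 fine_ge0 // iter_int_ge0 // => y; case: asboolP.
by apply: iter_int_ge0 => y; case: asboolP => // _; rewrite lee_fin exprM exprn_ge0 ?sqr_ge0.
Qed.

End SphereIntegral.

Section TestPolynomial.
Variable R : realType.

Definition dotp_mpoly n (v : 'rV[R]_n) : {mpoly R[n]} := \sum_(i < n) v 0 i *: 'X_i.

Lemma msize_dotp_mpoly n (v : 'rV[R]_n) : (msize (dotp_mpoly v) <= 2)%N.
Proof.
apply: leq_trans (msize_sum _ _ _) _; apply/bigmax_leqP => i _.
by apply: leq_trans (msizeZ_le _ _) _; rewrite msizeX mdeg1.
Qed.

Lemma msize_exp_le n (p : {mpoly R[n]}) k :
  (msize p <= 2)%N -> (msize (p ^+ k) <= k.+1)%N.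
Proof.
move=> p2; elim: k => [|k IH]; first by rewrite expr0 msize1.
rewrite exprS; have [->|p0] := eqVneq p 0; first by rewrite mul0r msize0.
have [->|pk0] := eqVneq (p ^+ k) 0; first by rewrite mulr0 msize0.
rewrite msizeM //.
have : (msize p + msize (p ^+ k) <= k.+3)%N by rewrite -addn2 addnC leq_add.
by case: (msize p + msize (p ^+ k))%N.
Qed.

Lemma peval_dotp_mpoly_exp d (v y : 'rV[R]_d.+1) t :
  peval (dotp_mpoly v ^+ t) y = (dotp v y) ^+ t.
Proof.
rewrite /peval rmorphXn /=; congr (_ ^+ _).
rewrite /dotp_mpoly raddf_sum /=; apply: eq_bigr => i _.
by rewrite mevalZ mevalXU.
Qed.

End TestPolynomial.

Section Sphere.
Variable R : realType.

Lemma exists_unit_orthogonal d (x : 'rV[R]_d.+2) :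
  exists v : 'rV[R]_d.+2, sqnorm v = 1 /\ dotp x v = 0.
Proof.
have [a [w ->]] := row_consP x; have [b [w' ->]] := row_consP w.
have [ab0|ab0] := eqVneq (a ^+ 2 + b ^+ 2) 0.
  move/eqP: ab0; rewrite paddr_eq0 ?sqr_ge0 // !sqrf_eq0 => /andP[/eqP-> /eqP->].
  exists (row_cons 1 (row_cons 0 0)); split.
    by rewrite !sqnorm_row_cons /sqnorm dotp0r; ring.
  by rewrite !dotp_row_cons dotp0r; ring.
pose rho := Num.sqrt (a ^+ 2 + b ^+ 2).
have rho2 : rho ^+ 2 = a ^+ 2 + b ^+ 2 by rewrite sqr_sqrtr // addr_ge0 // sqr_ge0.
have rho_neq0 : rho != 0 by rewrite -sqrf_eq0 rho2.
exists (row_cons (b / rho) (row_cons (- a / rho) 0)); split.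
  rewrite !sqnorm_row_cons /sqnorm dotp0r addr0.
  have -> : (b / rho) ^+ 2 + (- a / rho) ^+ 2 = (a ^+ 2 + b ^+ 2) / rho ^+ 2 by field.
  by rewrite -rho2 divff // expf_neq0.
by rewrite !dotp_row_cons dotp0r; field.
Qed.

Lemma continuous_sum n (I : Type) (s : seq I) (F : I -> 'rV[R]_n -> R) :
  (forall i, continuous (F i)) -> continuous (fun y => \sum_(i <- s) F i y).
Proof.
move=> cF; elim: s => [|i s IH].
  have -> : (fun y : 'rV[R]_n => \sum_(i <- [::]) F i y) = fun _ => 0.
    by apply/funext => y; rewrite big_nil.
  exact: cst_continuous.
have -> : (fun y : 'rV[R]_n => \sum_(j <- i :: s) F j y) =
          F i + (fun y => \sum_(j <- s) F j y).
  by apply/funext => y; rewrite big_cons.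
by move=> y; apply: continuousD; [exact: cF | exact: IH].
Qed.

Lemma dotp_continuous n (z : 'rV[R]_n) : continuous (fun y : 'rV[R]_n => dotp z y).
Proof.
apply: continuous_sum => i y.
apply: (@continuousM _ _ (fun _ => z 0 i) (fun y : 'rV[R]_n => y 0 i)).
  exact: cst_continuous.
exact: coord_continuous.
Qed.

Lemma sqnorm_continuous n : continuous (fun y : 'rV[R]_n => sqnorm y).
Proof.
apply: continuous_sum => i y.
by apply: (@continuousM _ _ (fun y : 'rV[R]_n => y 0 i) (fun y : 'rV[R]_n => y 0 i));
  exact: coord_continuous.
Qed.

Lemma closed_sphere d : closed (sphere d : set 'rV[R]_d.+1).
Proof.
apply: (@preimage_closed _ _ (fun y => sqnorm y) [set 1]); last exact: closed_eq.
by move=> y _; exact: sqnorm_continuous.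
Qed.

Lemma compact_sphere d : compact (sphere d : set 'rV[R]_d.+1).
Proof.
have K := @rV_compact R d.+1 (fun=> `[(-1 : R), 1]%classic)
  (fun _ => @segment_compact R (-1) 1).
apply: subclosed_compact; [exact: closed_sphere | exact: K |].
move=> y /= y1 i; rewrite /= in_itv /=.
have := sqr_coord_le_sqnorm y i; rewrite y1 (_ : ord0 = 0) // => h.
by apply/andP; split; nra.
Qed.

Lemma open_measurable_Rsp d (A : set 'rV[R]_d.+1) : open A -> measurable (A : set (Rsp R d)).
Proof. by move=> oA; apply: sub_gen_smallest. Qed.

Lemma measurable_sphere d : measurable (sphere d : set (Rsp R d)).
Proof.
rewrite -[sphere d]setCK; apply: measurableC; apply: open_measurable_Rsp.
by rewrite openC; exact: closed_sphere.
Qed.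

Lemma continuous_measurable_Rsp d (f : 'rV[R]_d.+1 -> R) : continuous f ->
  measurable_fun setT (f : Rsp R d -> R).
Proof.
move=> cf; apply: (measurability _ (RGenOInfty.measurableE R)).
move=> _ [_ [a ->] <-]; rewrite setTI; apply: open_measurable_Rsp.
have -> : f @^-1` `]a, +oo[%classic = f @^-1` [set x | a < x].
  by apply/seteqP; split => y /=; rewrite in_itv /= andbT.
by apply: (proj1 (continuousP f)) => //; exact: open_gt.
Qed.

End Sphere.

Section Support.
Variable R : realType.
Variable d : nat.
Variable mu : {measure set (Rsp R d) -> \bar R}.

Lemma negligible_bigcup_seq (s : seq (set 'rV[R]_d.+1)) :
  (forall U, U \in s -> mu.-negligible (U : set (Rsp R d))) ->
  mu.-negligible ([set y | exists2 U, U \in s & U y] : set (Rsp R d)).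
Proof.
elim: s => [|U s IH] sN.
  by apply: (negligibleS _ (negligible_set0 mu)) => y [U]; rewrite in_nil.
apply: (negligibleS (A := (U `|` [set y | exists2 V, V \in s & V y]) : set (Rsp R d))).
  by move=> y [V]; rewrite in_cons => /orP[/eqP -> |Vs Vy]; [left|right; exists V].
apply: negligibleU; first by apply: sN; rewrite mem_head.
by apply: IH => V Vs; apply: sN; rewrite in_cons Vs orbT.
Qed.

(* Each point off the support has an open mu-null neighbourhood; finitely
   many of them cover K. *)
Lemma negligible_compact_off_support (K : set 'rV[R]_d.+1) :
  compact K -> K `<=` ~` msupport mu -> mu.-negligible (K : set (Rsp R d)).
Proof.
rewrite compact_cover => /(_ (set 'rV[R]_d.+1) [set U | open U /\ mu U = 0%E] id) cK Ksupp.
case: cK => [U [] //|y Ky|D DN cover].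
  have /existsNP [U /not_implyP [oU /not_implyP [Uy muU]]] := Ksupp y Ky.
  exists U => //; split => //; apply/eqP; rewrite eq_le measure_ge0 andbT leNgt.
  exact/negP.
apply: (@negligibleS _ _ _ mu [set y | exists2 U, U \in finmap.enum_fset D & U y]) => //.
apply: negligible_bigcup_seq => U UD; have := DN U UD; rewrite inE => -[oU muU].
by exists U; split => //; exact: open_measurable_Rsp.
Qed.

Lemma negligible_sphere_outside_cap (x : 'rV[R]_d.+1) (r : R) :
  msupport mu `<=` cap d r x ->
  mu.-negligible ([set y | sphere d y /\ dotp x y < cos r] : set (Rsp R d)).
Proof.
move=> supp.
pose K n := [set y : 'rV[R]_d.+1 | sphere d y /\ dotp x y <= cos r - n.+1%:R^-1].
apply: (negligibleS (A := \bigcup_n (K n : set (Rsp R d)))).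
  move=> y [Sy xy]; have [k xyk] := ltr_add_invr xy.
  by exists k => //; split => //; rewrite lerBrDr ltW.
apply: negligible_bigcup => n; apply: negligible_compact_off_support.
  apply: subclosed_compact; [| exact: compact_sphere | by move=> y []].
  have -> : K n = sphere d `&` (fun y => dotp x y) @^-1` [set z | z <= cos r - n.+1%:R^-1].
    by [].
  apply: closedI; first exact: closed_sphere.
  apply: preimage_closed; last exact: closed_le.
  by move=> y _; exact: dotp_continuous.
move=> y [_ xy] /supp [_ /= cap_y]; move: xy; apply/negP; rewrite -ltNge.
by apply: lt_le_trans cap_y; rewrite ltrBlDr ltrDl invr_gt0 ltr0n.
Qed.

End Support.

Section CapBound.
Variable R : realType.

Lemma dotp_orthogonal_exp_le_sin n t (x v y : 'rV[R]_n) (r : R) :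
  sqnorm x = 1 -> sqnorm v = 1 -> dotp x v = 0 -> 0 <= cos r ->
  sqnorm y = 1 -> cos r <= dotp x y -> (dotp v y) ^+ (2 * t) <= (sin r) ^+ (2 * t).
Proof.
move=> x1 v1 xv cos_ge0 y1 cap_y.
have := bessel_ineq2 y x1 v1 xv; rewrite y1 => bessel.
have : (dotp v y) ^+ 2 <= sin r ^+ 2 by rewrite sin2cos2; nra.
by rewrite !exprM; apply: lerXn2r; rewrite ?nnegrE ?sqr_ge0.
Qed.

Local Open Scope ereal_scope.

Lemma integral_dotp_exp_le_sin d (t : nat) (mu : {measure set (Rsp R d) -> \bar R})
    (x v : 'rV[R]_d.+1) (r : R) :
  sqnorm x = 1%R -> sqnorm v = 1%R -> dotp x v = 0%R -> (0 <= cos r)%R ->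
  msupport mu `<=` cap d r x ->
  \int[mu]_(y in (sphere d : set (Rsp R d))) ((dotp v y) ^+ (2 * t))%:E
    <= ((sin r) ^+ (2 * t))%:E * mu (sphere d : set (Rsp R d)).
Proof.
move=> x1 v1 xv cos_ge0 supp.
rewrite -integral_cst; last exact: measurable_sphere.
apply: ae_ge0_le_integral.
- exact: measurable_sphere.
- by move=> y _; rewrite lee_fin exprM exprn_ge0 ?sqr_ge0.
- apply: measurable_funTS; apply/measurable_EFinP; apply: measurable_funX.
  by apply: continuous_measurable_Rsp; exact: dotp_continuous.
- by move=> y _; rewrite lee_fin exprM exprn_ge0 ?sqr_ge0.
- exact: measurable_cst.
apply: (negligibleS _ (negligible_sphere_outside_cap supp)).
move=> y /= /not_implyP [Sy le_y]; split => //; rewrite ltNge; apply/negP => cap_y.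
by apply: le_y; rewrite lee_fin (dotp_orthogonal_exp_le_sin _ x1 v1 xv cos_ge0 Sy cap_y).
Qed.

Lemma lee_div_of_mul (a c m : R) (L : \bar R) :
  (0 < a)%R -> (0 <= c)%R -> (0 <= m)%R -> 0 <= L ->
  a%:E * L <= c%:E * m%:E -> (a / m)%:E * L <= c%:E.
Proof.
move=> a_gt0 c_ge0 m_ge0; have [->|m_neq0] := eqVneq m 0%R.
  by rewrite invr0 mulr0 mul0e lee_fin.
have m_gt0 : (0 < m)%R by rewrite lt0r m_neq0.
case: L => [l| |] // L_ge0.
  by rewrite -!EFinM !lee_fin mulrAC ler_pdivrMr.
by rewrite muleC gt0_mulye ?lte_fin // leye_eq.
Qed.

End CapBound.

Unset Implicit Arguments.

Theorem lemma4p2 (R : realType) (d t : nat) (a r : R)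
  (mu : {measure set (Rsp R d) -> \bar R})
  (x : 'rV[R]_(d.+1)) :
  (1 <= d)%N -> (1 <= t)%N ->
  (mu [set: Rsp R d] < +oo)%E ->
  mu (~` (sphere d : set (Rsp R d))) = 0%E ->
  0 < a -> lower_MZ d t a mu ->
  0 < r -> r <= pi / 2 ->
  sphere d x ->
  msupport mu `<=` cap d r x ->
  ((a / fine (mu (sphere d : set (Rsp R d))))%:E * Lambda d t x
     <= ((sin r) ^+ (2 * t))%:E)%E.
Proof.
move=> d_ge1 _ mu_fin _ a_gt0 MZ r_gt0 r_le Sx supp.
case: d d_ge1 mu x mu_fin MZ Sx supp => [//|d] _ mu x mu_fin MZ Sx supp.
have [v [v1 xv]] := exists_unit_orthogonal x.
have cos_ge0 : 0 <= cos r.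
  by apply: cos_ge0_pihalf; rewrite r_le andbT; have := @pi_gt0 R; lra.
have MZv := MZ _ (msize_exp_le t (msize_dotp_mpoly v)).
have peval_sqr : (fun y => ((peval (dotp_mpoly v ^+ t) y) ^+ 2)%:E) =
                 (fun y => ((dotp v y) ^+ (2 * t))%:E :> \bar R).
  by apply/funext => y; rewrite peval_dotp_mpoly_exp -exprM mulnC.
rewrite peval_sqr (sphere_int_dotp_pow_axis t v1) -(sphere_int_dotp_pow_axis t Sx) in MZv.
have [m m_ge0 mE] : exists2 m, 0 <= m & mu (sphere d.+1 : set (Rsp R d.+1)) = m%:E.
  exists (fine (mu (sphere d.+1 : set (Rsp R d.+1)))); first exact/fine_ge0/measure_ge0.
  rewrite fineK // ge0_fin_numE ?measure_ge0 //.
  by apply: le_lt_trans mu_fin; apply: le_measure; rewrite ?inE //; exact: measurable_sphere.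
have sin_ge0 : 0 <= sin r ^+ (2 * t) by rewrite exprM exprn_ge0 ?sqr_ge0.
rewrite mE /=; apply: (lee_div_of_mul a_gt0 sin_ge0 m_ge0 (Lambda_ge0 t x)).
by rewrite -mE; apply: le_trans MZv (integral_dotp_exp_le_sin _ Sx v1 xv cos_ge0 supp).
Qed.
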